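(* Let $R$ be a ring. If $A$ is a clopen subset of $J\text{-spec}(R)$, then there exists $e\in R$ such that $A=W(e)$ and $eR(1-e)\subseteq J(R)$.
   Context: Rings are associative with identity, not necessarily commutative; $J(R)$ is the Jacobson radical. $J\text{-spec}(R)$ is the set of all prime (two-sided) ideals $P$ of $R$ with $J(R)\subseteq P$, topologized so that the closed sets are exactly the sets $W(I)=\{P\in J\text{-spec}(R): I\subseteq P\}$ for ideals $I$ of $R$. For $a\in R$, $W(a)=W(RaR)$. *)

(* Rings: associative with 1, not necessarily commutative,
   possibly the zero ring (pzRingType). Subsets of R are predicates R -> Prop. *)
From HB Require Import structures.
From mathcomp Require Import all_boot all_order all_algebra.
Set Implicit Arguments. Unset Strict Implicit. Unset Printing Implicit Defensive.
Import GRing.Theory.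
Local Open Scope ring_scope.

Section Defs.
Variable R : pzRingType.

Definition addsubgroup (I : R -> Prop) : Prop :=
  I 0 /\ (forall x y, I x -> I y -> I (x - y)).

Definition left_ideal (I : R -> Prop) : Prop :=
  addsubgroup I /\ (forall r x, I x -> I (r * x)).

Definition ideal (I : R -> Prop) : Prop :=
  addsubgroup I /\ (forall r x, I x -> I (r * x)) /\ (forall r x, I x -> I (x * r)).

Definition proper (I : R -> Prop) : Prop := exists x, ~ I x.

Definition maximal_left_ideal (M : R -> Prop) : Prop :=
  left_ideal M /\ proper M /\
  (forall N, left_ideal N -> proper N -> (forall x, M x -> N x) -> forall x, N x -> M x).

Definition jacobson (x : R) : Prop :=
  forall M, maximal_left_ideal M -> M x.

Definition prime_ideal (P : R -> Prop) : Prop :=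
  ideal P /\ proper P /\
  (forall I J, ideal I -> ideal J ->
     (forall a b, I a -> J b -> P (a * b)) ->
     (forall a, I a -> P a) \/ (forall b, J b -> P b)).

Definition Jspec (P : R -> Prop) : Prop :=
  prime_ideal P /\ (forall x, jacobson x -> P x).

Definition W (I : R -> Prop) (P : R -> Prop) : Prop :=
  Jspec P /\ (forall x, I x -> P x).

Definition gen_ideal (a : R) (x : R) : Prop :=
  forall I, ideal I -> I a -> I x.

Definition We (a : R) := W (gen_ideal a).

Definition closed_Jspec (A : (R -> Prop) -> Prop) : Prop :=
  exists I, ideal I /\ forall P, A P <-> W I P.

Definition open_Jspec (A : (R -> Prop) -> Prop) : Prop :=
  closed_Jspec (fun P => Jspec P /\ ~ A P).

End Defs.

(* The complement of a clopen set A = W(I) is closed, say W(K), so no point of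
   J-spec(R) contains both I and K and every point contains one of them.  The
   points of J-spec(R) include the cores {x | xR ⊆ M} of the maximal left
   ideals M.  If I + K + J(R) were proper it would lie in a maximal left ideal
   whose core would contain I and K; hence 1 = e + b + j with e ∈ I, b ∈ K,
   j ∈ J(R).  Every core contains I or K, so I ∩ K ⊆ J(R), and then
   e r (1 - e) = e r b + e r j ∈ J(R), while W(e) = W(I) because 1 ∉ P for
   P ∈ W(K). *)
From Pilot Require Import Defs.
From HB Require Import structures.
From mathcomp Require Import all_boot all_order all_algebra.
From mathcomp Require Import classical_sets.
From Stdlib Require Import Classical.
Set Implicit Arguments. Unset Strict Implicit. Unset Printing Implicit Defensive.
Import GRing.Theory.
Local Open Scope ring_scope.
Local Open Scope classical_set_scope.

Section JacobsonSpectrum.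
Variable R : pzRingType.
Implicit Types (I K L M N P : R -> Prop) (a b c j r s x y z : R).

Lemma addsubgroupD I x y : addsubgroup I -> I x -> I y -> I (x + y).
Proof.
move=> [I0 Isub] Ix Iy.
have : I (x - (0 - y)) by apply: (Isub) => //; apply: (Isub).
by rewrite sub0r opprK.
Qed.

Lemma ideal_left_ideal I : ideal I -> left_ideal I.
Proof. by case=> Iadd [Il _]; split. Qed.

Lemma left_ideal_not1 L : left_ideal L -> Defs.proper L -> ~ L 1.
Proof. by move=> [_ Lmul] [x Lx] L1; apply: Lx; rewrite -(mulr1 x); apply: Lmul. Qed.

Definition sum_ideal I K x := exists a b, I a /\ K b /\ x = a + b.

Lemma left_ideal_sum I K : left_ideal I -> left_ideal K -> left_ideal (sum_ideal I K).
Proof.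
move=> [[I0 Isub] Il] [[K0 Ksub] Kl]; split; first split.
- by exists 0, 0; rewrite addr0.
- move=> _ _ [a1 [b1 [Ia1 [Kb1 ->]]]] [a2 [b2 [Ia2 [Kb2 ->]]]].
  exists (a1 - a2), (b1 - b2); split; first exact: Isub.
  by split; [exact: Ksub | rewrite opprD addrACA].
- move=> r _ [a [b [Ia [Kb ->]]]]; exists (r * a), (r * b).
  by split; [exact: Il | split; [exact: Kl | rewrite mulrDr]].
Qed.

Lemma maximal_left_ideal_cover M c : maximal_left_ideal M -> ~ M c ->
  forall z, exists m s, M m /\ z = m + s * c.
Proof.
move=> [Mideal [_ Mmax]] Mc z; have [[M0 _] _] := Mideal.
have McL : left_ideal (sum_ideal M (fun x => exists s, x = s * c)).
  apply: left_ideal_sum Mideal _; split; first split.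
  - by exists 0; rewrite mul0r.
  - by move=> _ _ [s ->] [t ->]; exists (s - t); rewrite mulrBl.
  - by move=> r _ [s ->]; exists (r * s); rewrite mulrA.
apply: NNPP => Mcz.
apply: Mc; apply: (Mmax _ McL).
- by exists z => -[m [_ [Mm [[s ->] zE]]]]; apply: Mcz; exists m, s.
- by move=> x Mx; exists x, 0; split=> //; split; [exists 0; rewrite mul0r | rewrite addr0].
- by exists 0, c; split=> //; split; [exists 1; rewrite mul1r | rewrite add0r].
Qed.

Lemma maximal_left_ideal_exists L : left_ideal L -> ~ L 1 ->
  exists M, maximal_left_ideal M /\ (forall x, L x -> M x).
Proof.
move=> Lideal L1.
pose good X := left_ideal X /\ ~ X 1 /\ (forall x, L x -> X x).
(* The empty set is admitted so that the union of the empty chain qualifies. *)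
pose admissible X := (exists x, X x) -> good X.
have chain_union F : F `<=` admissible -> total_on F subset ->
    admissible (\bigcup_(X in F) X).
  move=> Fadm Ftot [x0 [X0 FX0 X0x0]].
  have goodF X x : F X -> X x -> good X by move=> FX Xx; apply: Fadm FX _; exists x.
  have [[[X00 _] _] [_ X0L]] := goodF _ _ FX0 X0x0.
  have upper X Y x y : F X -> F Y -> X x -> Y y ->
      exists2 Z, F Z & [/\ good Z, Z x & Z y].
    move=> FX FY Xx Yy; have [XY|YX] := Ftot X Y FX FY.
      by exists Y => //; split; [exact: goodF Yy | exact: XY |].
    by exists X => //; split; [exact: goodF Xx | | exact: YX].
  split; [split; [split|] | split].
  - by exists X0.
  - move=> x y [X FX Xx] [Y FY Yy].
    have [Z FZ [[[[_ Zsub] _] _] Zx Zy]] := upper _ _ _ _ FX FY Xx Yy.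
    by exists Z => //; apply: Zsub.
  - move=> r x [X FX Xx]; have [[_ Xmul] _] := goodF _ _ FX Xx.
    by exists X => //; apply: Xmul.
  - by move=> [X FX X1]; have [_ []] := goodF _ _ FX X1.
  - by move=> x Lx; exists X0 => //; apply: X0L.
have [A [Aadm Amax]] := Zorn_bigcup chain_union.
have [Aideal [A1 LA]] : good A.
  apply: Aadm; apply: NNPP => Aempty; apply: (Amax L) => [|_]; last by [].
  split; first by move=> x Ax; case: Aempty; exists x.
  by move=> LA; case: Aempty; exists 0; apply: LA; case: Lideal => -[].
exists A; split=> //; split=> //; split; first by exists 1.
move=> N Nideal Nproper AN x Nx; apply: NNPP => Ax.
apply: (Amax N) => [|_].
  by split=> // NA; apply: Ax; apply: NA.
split=> //; split; [exact: left_ideal_not1 | by move=> y /LA /AN].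
Qed.

Lemma maximal_left_ideal_colon M r : maximal_left_ideal M ->
  ~ (forall t, M (t * r)) -> maximal_left_ideal (fun y => M (y * r)).
Proof.
move=> HM notR; have [[[M0 Msub] Mmul] _] := HM.
split; [split; [split|] | split].
- by rewrite mul0r.
- by move=> a b Ma Mb; rewrite mulrBl; apply: Msub.
- by move=> s a Ma; rewrite -mulrA; apply: Mmul.
- by apply: NNPP => Hn; apply: notR => t; apply: NNPP => Ht; apply: Hn; exists t.
move=> N Nideal Nproper MN y Ny; apply: NNPP => Myr; exfalso.
apply: (left_ideal_not1 Nideal Nproper).
have [m [s [Mm rE]]] := maximal_left_ideal_cover HM Myr r.
(* r = m + s y r puts 1 - s y into the colon ideal, hence into N. *)
have N1sy : N (1 - s * y) by apply: MN; rewrite mulrBl mul1r -mulrA {1}rE addrK.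
have Nsy : N (s * y) by case: Nideal => _; apply.
by rewrite -(subrK (s * y) 1); apply: addsubgroupD Nideal.1 N1sy Nsy.
Qed.

Lemma jacobson_mulr x r : jacobson x -> jacobson (x * r).
Proof.
move=> Jx M HM; have [allM|notR] := classic (forall t, M (t * r)); first exact: allM.
exact: (Jx _ (maximal_left_ideal_colon HM notR)).
Qed.

Lemma ideal_jacobson : ideal (@jacobson R).
Proof.
split; [split | split].
- by move=> M [[[M0 _] _] _].
- by move=> x y Jx Jy M HM; have [[[_ Msub] _] _] := HM; apply: Msub; [apply: Jx | apply: Jy].
- by move=> r x Jx M HM; have [[_ Mmul] _] := HM; apply: Mmul; apply: Jx.
- by move=> r x Jx; apply: jacobson_mulr.
Qed.

Definition core M x := forall r, M (x * r).

Lemma core_sub M x : core M x -> M x.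
Proof. by move=> /(_ 1); rewrite mulr1. Qed.

Lemma ideal_sub_core M I : ideal I -> (forall x, I x -> M x) ->
  forall x, I x -> core M x.
Proof. by move=> [_ [_ Ir]] IM x Ix r; apply: IM; apply: Ir. Qed.

Lemma core_prime M : maximal_left_ideal M -> prime_ideal (core M).
Proof.
move=> HM; have [Mideal [Mproper _]] := HM; have [[M0 Msub] Mmul] := Mideal.
split; [split; [split|split] | split].
- by move=> r; rewrite mul0r.
- by move=> a b Ma Mb r; rewrite mulrBl; apply: Msub.
- by move=> s a Ma r; rewrite -mulrA; apply: Mmul.
- by move=> s a Ma r; rewrite -mulrA; apply: Ma.
- by exists 1 => /core_sub; apply: left_ideal_not1.
move=> I J [_ [_ Ir]] _ IJ; have [JM|] := classic (forall b, J b -> core M b).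
  by right.
move=> /not_all_ex_not [b] /(imply_to_and (J b)) [Jb] /not_all_ex_not [r0 Mbr0].
left=> a Ia r.
have [m [s [Mm ->]]] := maximal_left_ideal_cover HM Mbr0 r.
(* a (m + s b r0) = a m + (a s) b r0, and (a s) b lies in I J. *)
rewrite mulrDr; apply: addsubgroupD Mideal.1 _ _; first exact: Mmul.
by rewrite !mulrA; apply: IJ Jb _; apply: Ir.
Qed.

Lemma core_Jspec M : maximal_left_ideal M -> Jspec (core M).
Proof.
by move=> HM; split; [exact: core_prime | move=> x Jx r; exact: jacobson_mulr].
Qed.

Lemma W_disjoint_comaximal I K : ideal I -> ideal K ->
  (forall P, W I P -> W K P -> False) ->
  exists a b j, I a /\ K b /\ jacobson j /\ 1 = a + b + j.
Proof.
move=> Iideal Kideal disj.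
pose S := sum_ideal (sum_ideal I K) (@jacobson R).
have Sideal : left_ideal S.
  apply: left_ideal_sum (ideal_left_ideal ideal_jacobson).
  exact: left_ideal_sum (ideal_left_ideal Iideal) (ideal_left_ideal Kideal).
have [S1|] := classic (S 1).
  by have [_ [j [[a [b [Ia [Kb ->]]]] [Jj ->]]]] := S1; exists a, b, j.
move=> /(maximal_left_ideal_exists Sideal) [M [HM SM]]; exfalso.
have [[J0 _] _] := ideal_jacobson.
have [[I0 _] _] := Iideal; have [[K0 _] _] := Kideal.
apply: (disj (core M)); split; try exact: core_Jspec.
- apply: ideal_sub_core Iideal _ => x Ix; apply: SM.
  by exists x, 0; split; [exists x, 0; rewrite addr0 | rewrite addr0].
- apply: ideal_sub_core Kideal _ => x Kx; apply: SM.
  by exists x, 0; split; [exists 0, x; rewrite add0r | rewrite addr0].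
Qed.

Lemma W_cover_jacobson I K : (forall P, Jspec P -> W I P \/ W K P) ->
  forall x, I x -> K x -> jacobson x.
Proof.
move=> cover x Ix Kx M HM; apply: core_sub.
by case: (cover _ (core_Jspec HM)) => -[_ sub]; apply: sub.
Qed.

Lemma W_sub_We I a P : I a -> W I P -> We a P.
Proof.
move=> Ia [JP IP]; split=> // x; apply; last exact: IP.
by case: JP => -[].
Qed.

Lemma We_mem a P : We a P -> P a.
Proof. by move=> [_ Pgen]; apply: Pgen. Qed.

Lemma Jspec_not1 P : Jspec P -> ~ P 1.
Proof. by move=> [[/ideal_left_ideal Pideal [Pproper _]] _]; apply: left_ideal_not1. Qed.

End JacobsonSpectrum.

Theorem lemma3p2 (R : pzRingType) (A : (R -> Prop) -> Prop)
  (hA : forall P, A P -> Jspec P)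
  (hclosed : closed_Jspec A) (hopen : open_Jspec A) :
  exists e : R, (forall P, A P <-> We e P) /\
    (forall r : R, jacobson (e * r * (1 - e))).
Proof.
have [I [Iideal AI]] := hclosed; have [K [Kideal notAK]] := hopen.
have cover P : Jspec P -> W I P \/ W K P.
  by move=> JP; have [/AI|nAP] := classic (A P); [left | right; apply/notAK].
have disj P : W I P -> W K P -> False by move=> /AI AP /notAK [].
have [e [b [j [Ie [Kb [Jj E1]]]]]] := W_disjoint_comaximal Iideal Kideal disj.
exists e; split=> [P|r].
  split=> [/AI|WeP]; first exact: W_sub_We.
  have [JP _] := WeP; have [/AI //|[_ KP]] := cover P JP.
  case: (Jspec_not1 JP); have [[[Padd _] _] PJ] := JP.
  rewrite E1; apply: (addsubgroupD Padd _ (PJ _ Jj)).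
  exact: addsubgroupD Padd (We_mem WeP) (KP _ Kb).
have -> : 1 - e = b + j by rewrite E1 -[e + b + j]addrA [e + _]addrC addrK.
have [Jadd [Jl _]] := @ideal_jacobson R.
rewrite mulrDr; apply: addsubgroupD Jadd _ _; last exact: Jl.
have [_ [Il Ir]] := Iideal; have [_ [Kl _]] := Kideal.
by apply: (W_cover_jacobson cover); [apply: (Ir); apply: (Ir) | apply: Kl].
Qed.
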